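(* Let $n\ge1$ and $\vec p,\vec q\in[0,1]^n$ with $p_i\ge q_i$ for all $i$. Let $X=S_{\vec p}$ be a sum of $n$ independent $\mathrm{Ber}(p_i)$ random variables and $Y=S_{\vec q}$ a sum of $n$ independent $\mathrm{Ber}(q_i)$ random variables. Let $\sigma_{\vec p}^2=\mathrm{Var}(X)=\sum_ip_i(1-p_i)$, $m_{\vec p}=\mathbb E X$, $\Delta=\sum_{i=1}^n(p_i-q_i)$, $g(k)=\mathbb P(X\ge k)-\mathbb P(Y\ge k)$ for $k\in\mathbb Z$, and $J=\sum_{k\in\mathbb Z}(k-m_{\vec p})^2g(k)$. Then $$J\le2\Delta\big(\sigma_{\vec p}^2+1+\Delta^2\big).$$ *)

(* discrete probability over the finite outcome space
   {ffun 'I_n -> bool} of n independent Bernoulli trials. *)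
From mathcomp Require Import all_boot all_order all_algebra.
Set Implicit Arguments. Unset Strict Implicit. Unset Printing Implicit Defensive.
Import Order.TTheory GRing.Theory Num.Theory.
Local Open Scope ring_scope.

Definition ber_weight (R : realFieldType) (n : nat) (p : 'I_n -> R)
  (w : {ffun 'I_n -> bool}) : R :=
  \prod_(i < n) (if w i then p i else 1 - p i).

Definition succ_count (n : nat) (w : {ffun 'I_n -> bool}) : nat :=
  (\sum_(i < n) (w i : nat))%N.

Definition tail_prob (R : realFieldType) (n : nat) (p : 'I_n -> R) (k : int) : R :=
  \sum_(w : {ffun 'I_n -> bool} | (k <= (succ_count w)%:Z)%R) ber_weight p w.

Definition mean_pb (R : realFieldType) (n : nat) (p : 'I_n -> R) : R :=
  \sum_(i < n) p i.

Definition var_pb (R : realFieldType) (n : nat) (p : 'I_n -> R) : R :=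
  \sum_(i < n) p i * (1 - p i).

Definition Delta_pq (R : realFieldType) (n : nat) (p q : 'I_n -> R) : R :=
  \sum_(i < n) (p i - q i).

Definition g_pq (R : realFieldType) (n : nat) (p q : 'I_n -> R) (k : int) : R :=
  tail_prob p k - tail_prob q k.

(* J = sum_{k in Z} (k - m_p)^2 g(k).  Since g(k) = 0 for k <= 0 and k > n
   (both tails equal 1, resp. 0), the sum over Z equals the finite sum over
   k = 0..n. *)
Definition J_pq (R : realFieldType) (n : nat) (p q : 'I_n -> R) : R :=
  \sum_(0 <= k < n.+1) ((k%:R - mean_pb p) ^+ 2 * g_pq p q k%:Z).

From mathcomp Require Import all_boot all_order all_algebra.
From mathcomp Require Import ring lra.
Set Implicit Arguments. Unset Strict Implicit. Unset Printing Implicit Defensive.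
Import Order.TTheory GRing.Theory Num.Theory.
Local Open Scope ring_scope.

(* Let S be the number of successes, m = m_p and F k = sum_(i <= k) (i - m)^2.
   Summation by parts gives J = E_p F(S) - E_q F(S).  Replace p by q one
   coordinate at a time: the expectation is affine in each success
   probability, so the j-th replacement contributes
   (p_j - q_j) E_s [F(S + 1) - F(S)] = (p_j - q_j) E_s [(S + 1 - m)^2],
   where s has coordinates q_i for i < j, 0 at j and p_i for i > j.  This
   second moment is Var_s + (1 - x)^2 with x = m_p - m_s in [0, 1 + Delta],
   and Var_s <= sigma_p^2 + x because t (1 - t) is 1-Lipschitz on [0, 1].
   Hence each bracket is at most sigma_p^2 + 1 + Delta + Delta^2, and
   J <= Delta (sigma_p^2 + 1 + Delta + Delta^2) <= 2 Delta (sigma_p^2 + 1 + Delta^2). *)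

Section ProductBernoulli.
Variables (R : realFieldType) (n : nat).
Implicit Types (r : 'I_n -> R) (w : {ffun 'I_n -> bool}).
Implicit Types (F G : {ffun 'I_n -> bool} -> R).

Definition expect r F : R := \sum_w ber_weight r w * F w.

Definition update r (j : 'I_n) (t : R) : 'I_n -> R :=
  fun i => if i == j then t else r i.

Lemma eq_expect_prob r r' F : r =1 r' -> expect r F = expect r' F.
Proof.
by move=> rr'; apply: eq_bigr => w _; congr (_ * _); apply: eq_bigr => i _; rewrite rr'.
Qed.

Lemma eq_expect r F G : F =1 G -> expect r F = expect r G.
Proof. by move=> FG; apply: eq_bigr => w _; rewrite FG. Qed.

Lemma expect1 r : expect r (fun _ => 1) = 1.
Proof.
rewrite /expect; under eq_bigr do rewrite mulr1.
rewrite -(bigA_distr_bigA (fun i (b : bool) => if b then r i else 1 - r i)) /=.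
by apply: big1 => i _; rewrite big_bool /= subrKC.
Qed.

Lemma expectD r F G : expect r (fun w => F w + G w) = expect r F + expect r G.
Proof. by rewrite /expect -big_split; apply: eq_bigr => w _; rewrite mulrDr. Qed.

Lemma expectB r F G : expect r (fun w => F w - G w) = expect r F - expect r G.
Proof. by rewrite /expect -sumrB; apply: eq_bigr => w _; rewrite mulrBr. Qed.

Lemma expectZ r a F : expect r (fun w => a * F w) = a * expect r F.
Proof. by rewrite /expect mulr_sumr; apply: eq_bigr => w _; rewrite mulrCA. Qed.

Lemma expect_cst r c : expect r (fun _ => c) = c.
Proof. by rewrite -[c]mulr1 (expectZ r c (fun _ => 1)) expect1. Qed.

Lemma expect_sum r (F : 'I_n -> {ffun 'I_n -> bool} -> R) :
  expect r (fun w => \sum_i F i w) = \sum_i expect r (F i).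
Proof. by rewrite /expect; under eq_bigr do rewrite mulr_sumr; exact: exchange_big. Qed.

Lemma ber_weight_update r j t w : ber_weight (update r j t) w =
  (if w j then t else 1 - t) * \prod_(i < n | i != j) (if w i then r i else 1 - r i).
Proof.
rewrite /ber_weight (bigD1 j) //= /update eqxx; congr (_ * _).
by apply: eq_bigr => i /negbTE ->.
Qed.

Lemma expect_update r j t F : expect (update r j t) F =
  t * expect (update r j 1) F + (1 - t) * expect (update r j 0) F.
Proof.
rewrite /expect !mulr_sumr -big_split /=; apply: eq_bigr => w _.
rewrite !ber_weight_update; case: (w j); ring.
Qed.

Lemma expect_condition r j F :
  expect r F = r j * expect (update r j 1) F + (1 - r j) * expect (update r j 0) F.
Proof.
rewrite -expect_update; apply: eq_expect_prob => i.
by rewrite /update; case: eqP => [->|].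
Qed.

Lemma eq_expect_update1 r j F G :
  (forall w, w j -> F w = G w) -> expect (update r j 1) F = expect (update r j 1) G.
Proof.
move=> FG; apply: eq_bigr => w _; rewrite ber_weight_update.
by case: (boolP (w j)) => [/FG -> // | _]; rewrite subrr !mul0r.
Qed.

Lemma eq_expect_update0 r j F G :
  (forall w, ~~ w j -> F w = G w) -> expect (update r j 0) F = expect (update r j 0) G.
Proof.
move=> FG; apply: eq_bigr => w _; rewrite ber_weight_update.
by case: (boolP (w j)) => [_ | /FG -> //]; rewrite !mul0r.
Qed.

Lemma expect_indicator r k : expect r (fun w => (w k)%:R) = r k.
Proof.
rewrite (expect_condition r k).
rewrite (@eq_expect_update1 r k _ (fun _ => 1)); last by move=> w ->.
rewrite (@eq_expect_update0 r k _ (fun _ => 0)); last by move=> w /negbTE ->.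
by rewrite !expect_cst mulr0 mulr1 addr0.
Qed.

Lemma expect_indicatorM r i k : i != k ->
  expect r (fun w => (w i)%:R * (w k)%:R) = r i * r k.
Proof.
move=> ik; rewrite (expect_condition r i).
rewrite (@eq_expect_update1 r i _ (fun w => (w k)%:R)); last by move=> w ->; rewrite mul1r.
rewrite (@eq_expect_update0 r i _ (fun _ => 0)); last by move=> w /negbTE ->; rewrite mul0r.
by rewrite expect_indicator expect_cst mulr0 addr0 /update eq_sym (negbTE ik).
Qed.

Lemma natr_succ_count w : (succ_count w)%:R = \sum_i (w i)%:R :> R.
Proof. exact: natr_sum. Qed.

Lemma expect_succ_count r : expect r (fun w => (succ_count w)%:R) = mean_pb r.
Proof.
rewrite (eq_expect _ natr_succ_count) (expect_sum r (fun i w => (w i)%:R)).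
by apply: eq_bigr => i _; rewrite expect_indicator.
Qed.

Lemma expect_succ_count_sqr r :
  expect r (fun w => (succ_count w)%:R ^+ 2) = var_pb r + mean_pb r ^+ 2.
Proof.
have sqrE w : (succ_count w)%:R ^+ 2 = \sum_i \sum_k (w i)%:R * (w k)%:R :> R.
  by rewrite natr_succ_count expr2 mulr_suml; apply: eq_bigr => i _; rewrite mulr_sumr.
rewrite (eq_expect _ sqrE) (expect_sum r (fun i w => \sum_k (w i)%:R * (w k)%:R)).
have rowE i : expect r (fun w => \sum_k (w i)%:R * (w k)%:R) =
    r i * (1 - r i) + r i * mean_pb r.
  rewrite (expect_sum r (fun k w => (w i)%:R * (w k)%:R)) (bigD1 i) //=.
  rewrite (@eq_expect r _ (fun w => (w i)%:R)); last first.
    by move=> w; case: (w i); rewrite ?mulr1 ?mulr0.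
  rewrite (eq_bigr (fun k => r i * r k)); last first.
    by move=> k ki; rewrite expect_indicatorM // eq_sym.
  by rewrite expect_indicator /mean_pb [in RHS](bigD1 i) //= -mulr_sumr; ring.
rewrite (eq_bigr _ (fun i _ => rowE i)) big_split /= -mulr_suml.
by rewrite /var_pb -/(mean_pb r) expr2.
Qed.

Lemma expect_succ_count_dev r c :
  expect r (fun w => ((succ_count w)%:R - c) ^+ 2) = var_pb r + (mean_pb r - c) ^+ 2.
Proof.
have devE w : ((succ_count w)%:R - c) ^+ 2 =
    (succ_count w)%:R ^+ 2 + ((- 2 * c) * (succ_count w)%:R + c ^+ 2) :> R.
  by ring.
rewrite (eq_expect _ devE) !expectD expectZ expect_cst.
by rewrite expect_succ_count_sqr expect_succ_count; ring.
Qed.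

Definition toggle (j : 'I_n) w : {ffun 'I_n -> bool} :=
  [ffun i => if i == j then ~~ w i else w i].

Lemma toggleK j : involutive (toggle j).
Proof. by move=> w; apply/ffunP => i; rewrite !ffunE; case: eqP => // _; exact: negbK. Qed.

Lemma succ_count_toggle j w : ~~ w j -> succ_count (toggle j w) = (succ_count w).+1.
Proof.
move=> /negbTE wj; rewrite /succ_count (bigD1 j) //= [in RHS](bigD1 j) //=.
rewrite ffunE eqxx wj; congr (_ .+1).
by apply: eq_bigr => i /negbTE ne; rewrite ffunE ne.
Qed.

(* Toggling coordinate j pairs the outcomes with w j = true, which carry all the
   weight under [update r j 1], with those where w j = false. *)
Lemma expect_update1_shift r j (G : nat -> R) :
  expect (update r j 1) (fun w => G (succ_count w)) =
  expect (update r j 0) (fun w => G (succ_count w).+1).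
Proof.
rewrite /expect (reindex_inj (inv_inj (toggleK j))) /=; apply: eq_bigr => w _.
rewrite !ber_weight_update [toggle j w j]ffunE eqxx.
under eq_bigr => i /negbTE ne do rewrite ffunE ne.
case: (boolP (w j)) => [_ | wj]; first by rewrite /= subrr !mul0r.
by rewrite succ_count_toggle // subr0.
Qed.

Lemma expect_update_diff r j a b (G : nat -> R) :
  expect (update r j a) (fun w => G (succ_count w)) -
  expect (update r j b) (fun w => G (succ_count w)) =
  (a - b) * expect (update r j 0) (fun w => G (succ_count w).+1 - G (succ_count w)).
Proof.
rewrite (expect_update _ _ a) (expect_update _ _ b) expectB expect_update1_shift.
ring.
Qed.

Definition hybrid (p q : 'I_n -> R) (j : nat) : 'I_n -> R :=
  fun i => if (i < j)%N then q i else p i.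

Lemma expect_hybrid_diff p q (G : nat -> R) :
  expect p (fun w => G (succ_count w)) - expect q (fun w => G (succ_count w)) =
  \sum_(j < n) (p j - q j) *
    expect (update (hybrid p q j) j 0) (fun w => G (succ_count w).+1 - G (succ_count w)).
Proof.
have hybrid0 : p =1 hybrid p q 0 by [].
have hybridn : q =1 hybrid p q n by move=> i; rewrite /hybrid ltn_ord.
rewrite (eq_expect_prob _ hybrid0) (eq_expect_prob _ hybridn) -opprB.
pose f k := expect (hybrid p q k) (fun w => G (succ_count w)).
rewrite -(telescope_sumr f (leq0n n)).
rewrite -sumrN big_mkord; apply: eq_bigr => j _.
rewrite opprB -expect_update_diff; congr (_ - _); apply: eq_expect_prob => i.
  by rewrite /update /hybrid; case: eqP => [->|]; rewrite ?ltnn.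
rewrite /update /hybrid ltnS leq_eqVlt; case: (eqVneq i j) => [-> | ne]; rewrite ?eqxx //.
by move: ne; rewrite -val_eqE => /negbTE ->.
Qed.

Lemma succ_count_le w : (succ_count w <= n)%N.
Proof.
rewrite -[X in (_ <= X)%N]card_ord -sum1_card; apply: leq_sum => i _.
by case: (w i).
Qed.

Lemma sum_tail_prob r (c : nat -> R) :
  \sum_(0 <= k < n.+1) c k * tail_prob r k%:Z =
  expect r (fun w => \sum_(0 <= k < (succ_count w).+1) c k).
Proof.
rewrite /tail_prob /expect.
under eq_bigr => k _ do rewrite mulr_sumr big_mkcond.
rewrite exchange_big; apply: eq_bigr => w _.
rewrite mulr_sumr (big_nat_widen 0 (succ_count w).+1 n.+1 xpredT) ?ltnS ?succ_count_le //.
rewrite [in RHS]big_mkcond; apply: eq_bigr => k _ /=.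
by rewrite lez_nat ltnS; case: ifP => // _; rewrite mulrC.
Qed.

End ProductBernoulli.

Lemma bernoulli_var_le (R : realFieldType) (t p : R) :
  0 <= t <= p -> p <= 1 -> t * (1 - t) <= p * (1 - p) + (p - t).
Proof. by move=> /andP[t0 tp] p1; nra. Qed.

Lemma var_pb_le (R : realFieldType) (n : nat) (r p : 'I_n -> R) :
  (forall i, 0 <= r i <= p i) -> (forall i, p i <= 1) ->
  var_pb r <= var_pb p + (mean_pb p - mean_pb r).
Proof.
move=> rp p1; rewrite /mean_pb -sumrB -big_split; apply: ler_sum => i _.
exact: bernoulli_var_le.
Qed.

Lemma shifted_sqr_le (R : realFieldType) (x d : R) :
  0 <= d -> 0 <= x <= 1 + d -> x + (1 - x) ^+ 2 <= 1 + d + d ^+ 2.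
Proof. by move=> d0 /andP[x0 xd]; case: (lerP x 1) => x1; nra. Qed.

Section HybridBounds.
Variables (R : realFieldType) (n : nat) (p q : 'I_n -> R).
Hypotheses (hp : forall i, 0 <= p i <= 1) (hq : forall i, 0 <= q i <= 1).
Hypothesis hpq : forall i, q i <= p i.
Variable j : 'I_n.
Let s := update (hybrid p q j) j 0.

Lemma hybrid_coord_bounds i :
  0 <= s i <= p i /\ p i - s i <= p i - q i + (i == j)%:R.
Proof.
have := hp i; have := hq i; have := hpq i.
rewrite /s /update /hybrid => qp /andP[q0 q1] /andP[p0 p1].
by case: eqP => _; [|case: ifP => _]; split; rewrite ?q0 ?p0 /=; lra.
Qed.

Lemma mean_gap_hybrid : 0 <= mean_pb p - mean_pb s <= 1 + Delta_pq p q.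
Proof.
rewrite /mean_pb -sumrB; apply/andP; split.
  by apply: sumr_ge0 => i _; case: (hybrid_coord_bounds i) => /andP[_]; rewrite -subr_ge0.
have -> : 1 + Delta_pq p q = \sum_i (p i - q i + (i == j)%:R).
  rewrite big_split /= addrC; congr (_ + _).
  by rewrite (bigD1 j) //= eqxx big1 ?addr0 // => i /negbTE ->.
by apply: ler_sum => i _; case: (hybrid_coord_bounds i).
Qed.

Lemma hybrid_term_le : var_pb s + (mean_pb s - (mean_pb p - 1)) ^+ 2 <=
  var_pb p + 1 + Delta_pq p q + Delta_pq p q ^+ 2.
Proof.
have D0 : 0 <= Delta_pq p q by apply: sumr_ge0 => i _; rewrite subr_ge0.
have := shifted_sqr_le D0 mean_gap_hybrid.
have p1 i : p i <= 1 by case/andP: (hp i).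
have := @var_pb_le _ _ s p (fun i => proj1 (hybrid_coord_bounds i)) p1.
lra.
Qed.

End HybridBounds.

Theorem lemma8 (R : realFieldType) (n : nat) (p q : 'I_n -> R)
  (hn : (1 <= n)%N)
  (hp : forall i, 0 <= p i <= 1) (hq : forall i, 0 <= q i <= 1)
  (hpq : forall i, q i <= p i) :
  J_pq p q <= 2 * Delta_pq p q * (var_pb p + 1 + Delta_pq p q ^+ 2).
Proof.
set D := Delta_pq p q; set m := mean_pb p.
pose F k := \sum_(0 <= i < k.+1) (i%:R - m) ^+ 2.
have JE : J_pq p q = \sum_(j < n) (p j - q j) *
    (var_pb (update (hybrid p q j) j 0) +
     (mean_pb (update (hybrid p q j) j 0) - (m - 1)) ^+ 2).
  rewrite /J_pq /g_pq; under eq_bigr do rewrite mulrBr.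
  rewrite sumrB !sum_tail_prob (expect_hybrid_diff p q F); apply: eq_bigr => j _.
  rewrite -expect_succ_count_dev; congr (_ * _); apply: eq_expect => w.
  by rewrite /F big_nat_recr //= addrAC subrr add0r -addn1 natrD; ring.
have D0 : 0 <= D by apply: sumr_ge0 => i _; rewrite subr_ge0.
have V0 : 0 <= var_pb p.
  by apply: sumr_ge0 => i _; have /andP[p0 p1] := hp i; apply: mulr_ge0; lra.
rewrite JE; apply: le_trans (_ : \sum_j (p j - q j) * (var_pb p + 1 + D + D ^+ 2) <= _).
  apply: ler_sum => j _; apply: ler_wpM2l; first by rewrite subr_ge0.
  exact: hybrid_term_le.
rewrite -mulr_suml -/(Delta_pq p q) -/D.
have := mulr_ge0 D0 V0; have := mulr_ge0 D0 (sqr_ge0 (D - 1)); nra.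
Qed.
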